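(* Let $w$ be an infinite word over the binary alphabet $\{0,1\}$. 1. If $w$ is of bounded width, then $w$ is weak abelian periodic. 2. There exists an infinite binary word of bounded width which is not bounded weak abelian periodic. 3. If $w$ is bounded weak abelian periodic, then $w$ is of bounded width.
   Context: For a finite word $u$ and a letter $a$, $|u|_a$ is the number of occurrences of $a$ in $u$, and for nonempty $u$ the frequency of $a$ in $u$ is $\rho_a(u)=|u|_a/|u|$. An infinite word $w$ over a finite alphabet $\Sigma$ is weak abelian periodic (WAP) if $w=v_0v_1v_2\cdots$ with $v_0$ a finite word and $v_1,v_2,\dots$ nonempty finite words such that $\rho_a(v_i)=\rho_a(v_j)$ for all $a\in\Sigma$ and all $i,j\ge 1$. It is bounded WAP if moreover such a factorization exists with $|v_i|\le C$ for all $i$, for some constant $C$. The graphic $g_w$ of a binary word $w=w_1w_2\cdots$ is the piecewise linear path in $\mathbb{R}^2$ starting at $(0,0)$ where the $n$-th step moves by the vector $(1,-1)$ if $w_n=0$ and by $(1,1)$ if $w_n=1$; thus $g_w$ is a function with $g_w(n)=|w_1\cdots w_n|_1-|w_1\cdots w_n|_0$ at integers, linear in between. A binary infinite word $w$ is of bounded width if there exist rational numbers $a,b_1,b_2$ with $ax+b_1\le g_w(x)\le ax+b_2$ for all $x\ge 0$. *)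

From Stdlib Require Import Reals.
From mathcomp Require Import all_boot all_order all_algebra.
From mathcomp Require Import Rstruct.
Set Implicit Arguments. Unset Strict Implicit. Unset Printing Implicit Defensive.
Import Order.TTheory GRing.Theory Num.Theory.
Local Open Scope ring_scope.

(* An infinite word w = w_1 w_2 ... over T is a function nat -> T,
   with (w k) the letter w_{k+1} (0-based indexing). *)

Definition occ {T : eqType} (w : nat -> T) (a : T) (m n : nat) : nat :=
  (\sum_(m <= k < n) (w k == a))%N.

Definition freq {T : eqType} (w : nat -> T) (a : T) (m n : nat) : rat :=
  (occ w a m n)%:R / (n - m)%:R.

(* A factorization w = v0 v1 v2 ... is encoded by cut points p :
   v0 = w[0, p 0), and v_{i+1} = w[p i, p (i+1)); nonemptiness of the v_i
   (i >= 1) is strict increase of p. *)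
Definition wap_factorization {T : finType} (w : nat -> T) (p : nat -> nat) : Prop :=
  (forall i, (p i < p i.+1)%N) /\
  (forall (a : T) (i j : nat), freq w a (p i) (p i.+1) = freq w a (p j) (p j.+1)).

Definition WAP {T : finType} (w : nat -> T) : Prop :=
  exists p, wap_factorization w p.

Definition bounded_WAP {T : finType} (w : nat -> T) : Prop :=
  exists p, wap_factorization w p /\ exists C : nat, forall i, (p i.+1 - p i <= C)%N.

(* binary words: true = letter 1, false = letter 0 *)
Definition step (b : bool) : R := if b then 1 else -1.

Definition gint (w : nat -> bool) (n : nat) : R := \sum_(k < n) step (w k).

(* the graphic g_w : piecewise linear interpolation, for x >= 0 *)
Definition graphic (w : nat -> bool) (x : R) : R :=
  let n := Num.truncn x in gint w n + (x - n%:R) * step (w n).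

Definition bounded_width (w : nat -> bool) : Prop :=
  exists a b1 b2 : rat, forall x : R, 0 <= x ->
    ratr a * x + ratr b1 <= graphic w x /\ graphic w x <= ratr a * x + ratr b2.

(* For a binary word the frequency of 1 in the factor w[m, n) is (1 + k) / 2,
   where k is the slope of the chord of the graphic from m to n.  Hence a
   factorization is weak abelian periodic exactly when its cut points lie on one
   line, while bounded width says that the graphic stays in a strip around a
   line, which only needs checking at integer points.
   (1) In a strip of rational slope a = num / den, den * (g(n) - a n) takes
   finitely many integer values; the n realizing a value that recurs infinitely
   often are collinear cut points.
   (3) Collinear cut points with bounded gaps, together with the 1-Lipschitz
   graphic, give a strip.
   (2) Take the word whose height oscillates in {0, 1} or in {2, 3} on blocks of
   doubling lengths: it has bounded width, but bounded WAP would put the cut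
   points on a horizontal line g = c, and with bounded gaps some cut point falls
   in a long block on the wrong side of c. *)

From Stdlib Require Import Reals Classical.
From mathcomp Require Import all_boot all_order all_algebra.
From mathcomp Require Import Rstruct.
From mathcomp Require Import zify ring lra.
Set Implicit Arguments. Unset Strict Implicit. Unset Printing Implicit Defensive.
Import Order.TTheory GRing.Theory Num.Theory.
Local Open Scope ring_scope.

Lemma occ_cat (T : eqType) (w : nat -> T) a m n p :
  (m <= n <= p)%N -> occ w a m p = (occ w a m n + occ w a n p)%N.
Proof. by case/andP=> mn np; rewrite /occ (big_cat_nat mn np). Qed.

Lemma occ_nat_recr (T : eqType) (w : nat -> T) a m n :
  (m <= n)%N -> occ w a m n.+1 = (occ w a m n + (w n == a))%N.
Proof. by move=> mn; rewrite /occ big_nat_recr. Qed.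

Lemma occ_true_false (w : nat -> bool) m n :
  (occ w true m n + occ w false m n)%N = (n - m)%N.
Proof.
rewrite /occ -big_split /= -[RHS]muln1 -sum_nat_const_nat.
by apply: eq_bigr => k _; case: (w k).
Qed.

Definition height (w : nat -> bool) (n : nat) : int :=
  (occ w true 0 n)%:Z - (occ w false 0 n)%:Z.

Lemma height0 w : height w 0 = 0.
Proof. by rewrite /height /occ !big_geq. Qed.

Lemma heightS w n : height w n.+1 = height w n + (if w n then 1 else -1).
Proof. rewrite /height !occ_nat_recr //; case: (w n) => /=; lia. Qed.

Lemma heightB w m n : (m <= n)%N ->
  height w n - height w m = (occ w true m n)%:Z - (occ w false m n)%:Z.
Proof. by move=> mn; rewrite /height !(@occ_cat _ _ _ 0 m n) //; lia. Qed.

Lemma height_lipschitz w m n : (m <= n)%N -> `|height w n - height w m| <= (n - m)%:Z.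
Proof. move=> mn; rewrite heightB // -(occ_true_false w m n); lia. Qed.

Lemma gint_height w n : gint w n = (height w n)%:~R.
Proof.
elim: n => [|n IH]; first by rewrite height0 /gint big_ord0.
rewrite /gint big_ord_recr /= -/(gint w n) IH heightS [RHS]rmorphD /step.
by case: (w n); rewrite ?rmorph1 ?rmorphN1.
Qed.

Definition hslope (w : nat -> bool) (m n : nat) : rat :=
  (height w n - height w m)%:~R / (n - m)%:R.

Lemma freq_hslope w m n : (m < n)%N ->
  freq w true m n = (1 + hslope w m n) / 2 /\ freq w false m n = (1 - hslope w m n) / 2.
Proof.
move=> mn; rewrite /freq /hslope heightB ?(ltnW mn) // rmorphB /= -!pmulrn.
have /(congr1 (GRing.natmul (1 : rat))) := occ_true_false w m n; rewrite natrD => occE.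
have L0 : (n - m)%:R != 0 :> rat by rewrite pnatr_eq0 subn_eq0 -ltnNge.
by rewrite -occE in L0 *; split; field.
Qed.

Lemma height_hslope w m n : (m < n)%N ->
  (height w n)%:~R = (height w m)%:~R + hslope w m n * (n%:R - m%:R) :> rat.
Proof.
move=> mn; rewrite /hslope -natrB ?(ltnW mn) // mulfVK ?pnatr_eq0 ?subn_eq0 -?ltnNge //.
by rewrite -rmorphD /= addrC subrK.
Qed.

Definition cuts_on_line (w : nat -> bool) (p : nat -> nat) (s c : rat) : Prop :=
  forall i, (height w (p i))%:~R = s * (p i)%:R + c.

Lemma wap_factorizationP w p : (forall i, (p i < p i.+1)%N) ->
  wap_factorization w p <-> exists s c, cuts_on_line w p s c.
Proof.
move=> p_incr; split.
  case=> _ freq_const; pose s := hslope w (p 0%N) (p 1%N).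
  have hslope_const i : hslope w (p i) (p i.+1) = s.
    have := freq_const true i 0%N.
    by rewrite (freq_hslope w (p_incr i)).1 (freq_hslope w (p_incr 0%N)).1 /s; lra.
  exists s, ((height w (p 0%N))%:~R - s * (p 0%N)%:R); elim=> [|i IH]; first lra.
  by rewrite (height_hslope w (p_incr i)) IH hslope_const; ring.
case=> s [c on_line]; split => // a i j.
have hslope_const k : hslope w (p k) (p k.+1) = s.
  have := height_hslope w (p_incr k); rewrite !on_line => e.
  have : (p k.+1)%:R - (p k)%:R != 0 :> rat by rewrite -natrB ?pnatr_eq0 ?subn_eq0 -?ltnNge ?(ltnW (p_incr k)).
  move=> L0; apply: (mulIf L0); lra.
have [ti fi] := freq_hslope w (p_incr i); have [tj fj] := freq_hslope w (p_incr j).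
by case: a; rewrite ?ti ?tj ?fi ?fj !hslope_const.
Qed.

Lemma graphicE w x : graphic w x =
  gint w (Num.truncn x) + (x - (Num.truncn x)%:R) * step (w (Num.truncn x)).
Proof. by []. Qed.

Lemma graphic_nat w n : graphic w n%:R = gint w n.
Proof. by rewrite graphicE natrK subrr mul0r addr0. Qed.

Definition height_in_strip (w : nat -> bool) (s c E : rat) : Prop :=
  forall n, `|(height w n)%:~R - (s * n%:R + c)| <= E.

Lemma bounded_width_strip w : bounded_width w -> exists s c E, height_in_strip w s c E.
Proof.
case=> a [b1 [b2 bw]]; exists a, ((b1 + b2) / 2), ((b2 - b1) / 2) => n.
have := bw n%:R (ler0n _ _); rewrite graphic_nat gint_height -(ratr_int R) -(ratr_nat R).
rewrite -!rmorphM -!rmorphD !ler_rat /= => -[lo hi].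
by rewrite ler_norml; apply/andP; split; lra.
Qed.

Lemma strip_bounded_width w s c E : height_in_strip w s c E -> bounded_width w.
Proof.
move=> strip; exists s, (c - E - 1 - `|s|), (c + E + 1 + `|s|) => x x0.
have /andP[n_le_x x_lt_n1] := truncn_itv x0.
set n := Num.truncn x in n_le_x x_lt_n1; set t := x - n%:R.
have t01 : 0 <= t <= 1 by apply/andP; split; rewrite /t ?subr_ge0 //; rewrite -natr1 in x_lt_n1; lra.
have dev_n : `|ratr (height w n)%:~R - (ratr s * n%:R + ratr c)| <= ratr E :> R.
  by rewrite -(ratr_nat R) -rmorphM -rmorphD -rmorphB -ratr_norm ler_rat.
have dev_step : `|t * (step (w n) - ratr s)| <= 1 + `|ratr s|.
  rewrite normrM -[X in _ <= X]mul1r; apply: ler_pM => //.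
    by rewrite ger0_norm; case/andP: t01.
  by apply: le_trans (ler_normB _ _) _; rewrite /step; case: (w n); rewrite ?normrN normr1.
have : `|graphic w x - (ratr s * x + ratr c)| <= ratr E + (1 + `|ratr s|).
  have -> : graphic w x - (ratr s * x + ratr c) =
      (ratr (height w n)%:~R - (ratr s * n%:R + ratr c)) + t * (step (w n) - ratr s).
    by rewrite graphicE -/n -/t gint_height ratr_int /t; ring.
  exact: le_trans (ler_normD _ _) (lerD dev_n dev_step).
by rewrite ler_norml !rmorphD !rmorphN /= ratr_norm rmorph1 => /andP[]; split; lra.
Qed.

Section IncreasingCuts.
Variable p : nat -> nat.
Hypothesis p_incr : forall i, (p i < p i.+1)%N.

Lemma increasing_addn i : (p 0 + i <= p i)%N.
Proof. by elim: i => [|i IH]; rewrite ?addn0 // addnS; apply: leq_ltn_trans (p_incr i). Qed.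

Lemma increasing_bracket n : (p 0 <= n)%N -> exists i, (p i <= n < p i.+1)%N.
Proof.
move=> p0n; have ub i : (p i <= n)%N -> (i <= n)%N.
  by move=> pin; have := increasing_addn i; lia.
have [i pin i_max] := ex_maxnP (ex_intro (fun i => p i <= n)%N 0%N p0n) ub.
by exists i; rewrite pin ltnNge; apply/negP => /i_max; rewrite ltnn.
Qed.

End IncreasingCuts.

Lemma nat_seq_recurrent_value (F : nat -> nat) (M N0 : nat) :
  (forall n, (N0 <= n)%N -> (F n <= M)%N) -> exists c, forall N, exists2 n, (N <= n)%N & F n = c.
Proof.
elim: M N0 => [|M IH] N0 F_le.
  exists 0%N => N; exists (maxn N N0); first exact: leq_maxl.
  by apply/eqP; rewrite -leqn0 F_le // leq_maxr.
have [top_recurs|] := classic (forall N, exists2 n, (N <= n)%N & F n = M.+1); first by exists M.+1.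
case/not_all_ex_not=> N1 top_gone; apply: (IH (maxn N0 N1)) => n; rewrite geq_max => /andP[N0n N1n].
have := F_le n N0n; rewrite leq_eqVlt ltnS => /orP[/eqP top|] //.
by case: top_gone; exists n.
Qed.

Lemma increasing_seq_of_infinite (P : pred nat) : (forall N, exists2 n, (N <= n)%N & P n) ->
  exists p, (forall i, (p i < p i.+1)%N) /\ forall i, P (p i).
Proof.
move=> infP; have next N : exists n, (N < n)%N && P n.
  by have [n Nn Pn] := infP N.+1; exists n; rewrite Nn.
pose p i := iter i.+1 (fun N => xchoose (next N)) 0%N.
exists p; split=> i; first by have /andP[] := xchooseP (next (p i)).
by have /andP[] := xchooseP (next (iter i (fun N => xchoose (next N)) 0%N)).
Qed.

Lemma bounded_int_seq_constant_subseq (F : nat -> int) (lo hi : int) :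
  (forall n, lo <= F n <= hi) ->
  exists z p, (forall i, (p i < p i.+1)%N) /\ forall i, F (p i) = z.
Proof.
move=> F_bnd; have [|c recurs] := @nat_seq_recurrent_value (fun n => `|F n - lo|%N) `|hi - lo|%N 0.
  by move=> n _; have := F_bnd n; lia.
have [|p [p_incr Fp]] := @increasing_seq_of_infinite (fun n => `|F n - lo|%N == c).
  by move=> N; have [n Nn Fn] := recurs N; exists n; rewrite ?Fn.
by exists (lo + c%:Z), p; split => // i; have := F_bnd (p i); have := eqP (Fp i); lia.
Qed.

Lemma strip_WAP w s c E : height_in_strip w s c E -> WAP w.
Proof.
move=> strip; pose d := denq s.
have d_gt0 : (0 : rat) < d%:~R by rewrite ltr0z denq_gt0.
pose Z n := d * height w n - numq s * n%:Z.
have ZE n : (Z n)%:~R = d%:~R * ((height w n)%:~R - s * n%:R) :> rat.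
  by rewrite /Z rmorphB !rmorphM /= numqE -pmulrn; ring.
have Z_bnd n : Num.floor (d%:~R * (c - E)) <= Z n <= Num.ceil (d%:~R * (c + E)).
  have := strip n; rewrite ler_norml => /andP[lo hi].
  rewrite -!(ler_int rat) (le_trans (floor_le _)) ?(le_trans _ (ceil_ge _)) //= ZE ler_pM2l //; lra.
have [z [p [p_incr Zp]]] := bounded_int_seq_constant_subseq Z_bnd.
exists p; apply/(wap_factorizationP w p_incr); exists s, (z%:~R / d%:~R) => i.
by rewrite -(Zp i) ZE; field; lra.
Qed.

Lemma height_dev_addn w (s c : rat) m d :
  `|(height w (m + d))%:~R - (s * (m + d)%:R + c)|
    <= `|(height w m)%:~R - (s * m%:R + c)| + d%:R * (1 + `|s|).
Proof.
have lip : `|(height w (m + d) - height w m)%:~R| <= d%:R :> rat.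
  by have := height_lipschitz w (leq_addr d m); rewrite addKn -(ler_int rat) intr_norm.
have -> : (height w (m + d))%:~R - (s * (m + d)%:R + c) =
    ((height w m)%:~R - (s * m%:R + c)) + ((height w (m + d) - height w m)%:~R - s * d%:R).
  by move: (height w _) (height w m) => a b; rewrite rmorphB natrD /=; ring.
apply: le_trans (ler_normD _ _) _; rewrite lerD2l mulrDr mulr1 mulrC.
by apply: le_trans (ler_normB _ _) _; rewrite normrM normr_nat lerD2r.
Qed.

Lemma bounded_WAP_strip w : bounded_WAP w -> exists s c E, height_in_strip w s c E.
Proof.
case=> p [wap_p [C gap_le]]; have p_incr := wap_p.1.
have [s [c on_line]] := (wap_factorizationP w p_incr).1 wap_p.
exists s, c, (`|c| + (p 0%N + C)%:R * (1 + `|s|)) => n.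
have slack_ge0 : 0 <= 1 + `|s| by rewrite addr_ge0.
have [n_lt_p0|p0_le_n] := ltnP n (p 0%N).
  have := height_dev_addn w s c 0 n; rewrite !add0n height0 mulr0 !add0r normrN.
  move/le_trans; apply; rewrite lerD2l ler_wpM2r // ler_nat; lia.
have [i /andP[pi_le_n n_lt]] := increasing_bracket p_incr p0_le_n.
have := height_dev_addn w s c (p i) (n - p i); rewrite subnKC // on_line subrr normr0 add0r.
move/le_trans; apply; apply: ler_wpDl => //; rewrite ler_wpM2r // ler_nat.
by have := gap_le i; lia.
Qed.

Definition word_of_height (H : nat -> int) (n : nat) : bool := H n < H n.+1.

Lemma height_word_of_height H : H 0%N = 0 -> (forall n, `|H n.+1 - H n| = 1) ->
  forall n, height (word_of_height H) n = H n.
Proof.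
move=> H0 H_step; elim=> [|n IH]; first by rewrite height0.
by rewrite heightS IH /word_of_height; have := H_step n; case: ltP; lia.
Qed.

(* The height 2 t_m at 2m and 1 + 2 (t_m && t_(m+1)) at 2m + 1: a path of
   steps +-1 that follows 2 t at half speed. *)
Definition zigzag (t : nat -> bool) (n : nat) : int :=
  (odd n + 2 * (t n./2 && t (uphalf n)))%N%:Z.

Lemma zigzag_step t n : `|zigzag t n.+1 - zigzag t n| = 1.
Proof.
rewrite /zigzag /= uphalf_half.
by case: (odd n); rewrite /= ?add0n ?add1n; case: (t n./2) (t n./2.+1) => [] [].
Qed.

Lemma zigzag_bounds t n : 0 <= zigzag t n <= 3.
Proof. by rewrite /zigzag; case: (odd n); case: (t _ && t _). Qed.

Lemma zigzag_const_window t b M K : (forall m, (M <= m <= M + K)%N -> t m = b) ->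
  forall n, (M.*2 <= n <= M.*2 + K.*2)%N -> zigzag t n = (odd n + 2 * b)%N%:Z.
Proof.
move=> t_const n n_in; have n_split := odd_double_half n.
rewrite /zigzag uphalf_half !t_const ?andbb //; move: n_in n_split; case: (odd n) => /=; lia.
Qed.

Definition dyadic_parity (m : nat) : bool := odd (trunc_log 2 m.+1).

Lemma dyadic_parity0 : dyadic_parity 0 = false.
Proof. by rewrite /dyadic_parity trunc_log1. Qed.

Lemma dyadic_parity_window N K b :
  exists2 M, (N <= M)%N & forall m, (M <= m <= M + K)%N -> dyadic_parity m = b.
Proof.
pose j := ((N + K).*2 + b)%N.
have NK_lt : (N + K < 2 ^ j)%N.
  by apply: leq_trans (ltn_expl _ (isT : (1 < 2)%N)); rewrite /j -addnn; lia.
exists (2 ^ j).-1; first by lia.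
move=> m m_in; rewrite /dyadic_parity (@trunc_log_eq _ j) //.
  by rewrite /j oddD odd_double oddb.
rewrite expnS; have : (0 < 2 ^ j)%N by rewrite expn_gt0.
by move: m_in NK_lt; move: (2 ^ j)%N => P; lia.
Qed.

Lemma cuts_on_bounded_line p (s c B : rat) : (forall i, (p i < p i.+1)%N) ->
  (forall i, `|s * (p i)%:R + c| <= B) -> s = 0.
Proof.
move=> p_incr bnd; apply/eqP; apply: contraT => s_neq0.
have s_gt0 : 0 < `|s| by rewrite normr_gt0.
pose i := (Num.truncn ((B + `|c|) / `|s|)).+1.
have : (B + `|c|) / `|s| < i%:R by apply: truncnS_gt.
rewrite ltr_pdivrMr // => i_large.
have : `|s| * i%:R <= `|s| * (p i)%:R.
  by rewrite ler_pM2l // ler_nat; have := increasing_addn p_incr i; lia.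
have := ler_normB (s * (p i)%:R + c) c; rewrite addrK normrM normr_nat.
by have := bnd i; lra.
Qed.

Definition dyadic_zigzag_word : nat -> bool := word_of_height (zigzag dyadic_parity).

Lemma height_dyadic_zigzag n : height dyadic_zigzag_word n = zigzag dyadic_parity n.
Proof.
apply: height_word_of_height n; last exact: zigzag_step.
by rewrite /zigzag dyadic_parity0.
Qed.

Lemma dyadic_zigzag_bounded_width : bounded_width dyadic_zigzag_word.
Proof.
apply: (@strip_bounded_width _ 0 0 3) => n; rewrite mul0r !add0r subr0 height_dyadic_zigzag.
have /andP[lo hi] := zigzag_bounds dyadic_parity n.
by rewrite ger0_norm ?ler0z // -(ler_int rat) in hi *.
Qed.

Lemma dyadic_zigzag_not_bounded_WAP : ~ bounded_WAP dyadic_zigzag_word.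
Proof.
case=> p [wap_p [C gap_le]]; have p_incr := wap_p.1.
have [s [c on_line]] := (wap_factorizationP _ p_incr).1 wap_p.
have s0 : s = 0.
  apply: (@cuts_on_bounded_line p s c 3 p_incr) => i; rewrite -on_line height_dyadic_zigzag.
  have /andP[lo hi] := zigzag_bounds dyadic_parity (p i).
  by rewrite ger0_norm ?ler0z // -(ler_int rat) in hi *.
have [M p0_le_M window] := dyadic_parity_window (p 0%N) C (c < 2).
have p0_le_2M : (p 0%N <= M.*2)%N by rewrite -addnn; lia.
have [i /andP[pi_le pi1_gt]] := increasing_bracket p_incr p0_le_2M.
have pi1_in : (M.*2 <= p i.+1 <= M.*2 + C.*2)%N by have := gap_le i; rewrite -!addnn; lia.
have := on_line i.+1; rewrite s0 mul0r add0r height_dyadic_zigzag.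
rewrite (zigzag_const_window window pi1_in).
(* on this window the height is >= 2 exactly when c < 2 *)
by case: ltP => c_cmp; case: (odd _) => /= c_eq; move: c_cmp; rewrite -c_eq.
Qed.

Theorem proposition1 :
  (forall w : nat -> bool, bounded_width w -> WAP w) /\
  (exists w : nat -> bool, bounded_width w /\ ~ bounded_WAP w) /\
  (forall w : nat -> bool, bounded_WAP w -> bounded_width w).
Proof.
split; first by move=> w /bounded_width_strip [s [c [E /strip_WAP]]].
split; first by exists dyadic_zigzag_word; split;
  [exact: dyadic_zigzag_bounded_width | exact: dyadic_zigzag_not_bounded_WAP].
by move=> w /bounded_WAP_strip [s [c [E /strip_bounded_width]]].
Qed.
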